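(* Let $\mathcal{A}=(T(\Sigma,X),\Rightarrow_\Pi)$ be an abstract reduction system closed under substitutions, and let $(u_1\Rightarrow_{w_1}v_1,\ u_2\Rightarrow_{w_2}v_2)$ be a recurrent pair in $\mathcal{A}$, with $c_1,c_2,x,y,s,t,n_1,n_2,n_3,n_4$ as in the definition of recurrent pair. Then for all $m,n\in\mathbb{N}$ with $n\ge n_2$, the term $c_1[m,n]$ starts an infinite $(\Rightarrow_{w_1}^{*}\circ\Rightarrow_{w_2})$-chain, i.e. there is an infinite sequence $a_0=c_1[m,n],a_1,a_2,\dots$ of terms with $a_k\ (\Rightarrow_{w_1}^{*}\circ\Rightarrow_{w_2})\ a_{k+1}$ for all $k\in\mathbb{N}$.
   Context: Fix a signature $\Sigma$, a countably infinite set $X$ of variables disjoint from $\Sigma$, and two distinct fresh hole constants $\square,\square'\notin\Sigma\cup X$. Terms are elements of $T(\Sigma,X)$; substitutions $\theta$ (maps $X\to T(\Sigma,X)$ moving finitely many variables) act homomorphically; $\mathit{Var}$ denotes the variable set. An abstract reduction system $(A,\Rightarrow_\Pi)$ has $\Rightarrow_\Pi=\bigcup_{\pi\in\Pi}\Rightarrow_\pi$; for $w=\langle\pi_1,\dots,\pi_k\rangle\in\Pi^*$, $\Rightarrow_w=\Rightarrow_{\pi_1}\circ\cdots\circ\Rightarrow_{\pi_k}$ ($\Rightarrow_\epsilon$ the identity), where $\phi\circ\varphi=\{(a,a'')\mid\exists a_1,(a,a_1)\in\phi,(a_1,a'')\in\varphi\}$; $\Rightarrow_w^*$ is the reflexive-transitive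 closure of $\Rightarrow_w$. It is closed under substitutions if for all $s,t\in A$, $w\in\Pi^*$ and substitutions $\theta$, $s\Rightarrow_w t$ implies $s\theta\Rightarrow_w t\theta$. Let $c_1$ be a term over $\Sigma\cup\{\square,\square'\}$ and $X$ containing at least one occurrence of $\square$ and of $\square'$, and $c_1[t,t']$ the result of replacing all $\square$ by $t$ and all $\square'$ by $t'$. Let $c_2$ be a term over $\Sigma\cup\{\square\}$ and $X$ containing at least one $\square$ (and no $\square'$), $c_2[t]$ the result of replacing all $\square$ by $t$, $c_2^0[t]=t$, $c_2^{k+1}[t]=c_2[c_2^k[t]]$. A recurrent pair in $\mathcal{A}$ is a pair of chains $u_1\Rightarrow_{w_1}v_1$ and $u_2\Rightarrow_{w_2}v_2$ ($w_1,w_2\in\Pi^*$) such that: $u_1=c_1[x,c_2[y]]$, $v_1=c_1[c_2^{n_1}[x],y]$, $u_2=c_1[x,c_2^{n_2}[s]]$, $v_2=c_1[c_2^{n_3}[t],c_2^{n_4}[x]]$ for variables $x\neq y$ with $\{x,y\}\cap\mathit{Var}(c_1)=\emptyset$, a term $s$, naturals $n_1,n_2,n_3,n_4$; $\mathit{Var}(c_2)=\mathit{Var}(s)=\emptyset$; $t\in\{x,s\}$; and $n_4\ge n_2$. For $m,n\in\mathbb{N}$, $c_1[m,n]$ denotes the term $c_1[c_2^m[s],c_2^n[s]]$. *)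

From Stdlib Require Import List Arith Relations.
Import ListNotations.

Inductive term (F V : Type) : Type :=
| Var : V -> term F V
| Fun : F -> list (term F V) -> term F V.
Arguments Var {F V} _.
Arguments Fun {F V} _ _.

(* Well-formedness: each symbol applied to exactly ar f arguments.
   T(Sigma,X) = the well-formed terms. *)
Fixpoint wf {F V : Type} (ar : F -> nat) (t : term F V) : Prop :=
  match t with
  | Var _ => True
  | Fun f args =>
      length args = ar f /\
      (fix wfl (l : list (term F V)) : Prop :=
         match l with nil => True | a :: l' => wf ar a /\ wfl l' end) args
  end.

Fixpoint vars {F V : Type} (t : term F V) : list V :=
  match t with
  | Var x => [x]
  | Fun _ args => flat_map vars args
  end.

Fixpoint subst {F V : Type} (theta : V -> term F V) (t : term F V) : term F V :=
  match t with
  | Var x => theta x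
  | Fun f args => Fun f (map (subst theta) args)
  end.

Definition is_subst {F V : Type} (ar : F -> nat) (theta : V -> term F V) : Prop :=
  (forall v, wf ar (theta v)) /\
  exists l : list V, forall v, ~ In v l -> theta v = Var v.

Inductive hole : Type := Box | Box'.

Definition ctx (F V : Type) : Type := term (F + hole) V.

Definition ar_ext {F : Type} (ar : F -> nat) (g : F + hole) : nat :=
  match g with inl f => ar f | inr _ => 0 end.

Fixpoint hole_occurs {F V : Type} (h : hole) (c : ctx F V) : Prop :=
  match c with
  | Var _ => False
  | Fun (inl _) args =>
      (fix occl (l : list (ctx F V)) : Prop :=
         match l with nil => False | a :: l' => hole_occurs h a \/ occl l' end) args
  | Fun (inr h') _ => h' = h
  end.

Fixpoint fill2 {F V : Type} (c : ctx F V) (t t' : term F V) : term F V :=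
  match c with
  | Var x => Var x
  | Fun (inl f) args => Fun f (map (fun a => fill2 a t t') args)
  | Fun (inr Box) _ => t
  | Fun (inr Box') _ => t'
  end.

Definition fill1 {F V : Type} (c : ctx F V) (t : term F V) : term F V :=
  fill2 c t t.

Fixpoint fill_iter {F V : Type} (c : ctx F V) (k : nat) (t : term F V) : term F V :=
  match k with
  | 0 => t
  | S k' => fill1 c (fill_iter c k' t)
  end.

(* Abstract reduction system on terms: relations =>_pi indexed by pi in Pi.
   =>_w for a word w = <pi_1,...,pi_k> is the composition
   =>_pi_1 o ... o =>_pi_k (apply pi_1 first), =>_epsilon the identity. *)
Fixpoint steps {A Pi : Type} (R : Pi -> A -> A -> Prop) (w : list Pi) (a b : A) : Prop :=
  match w with
  | nil => a = b
  | p :: w' => exists a1, R p a a1 /\ steps R w' a1 b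
  end.

Definition closed_under_subst {F V Pi : Type} (ar : F -> nat)
  (R : Pi -> term F V -> term F V -> Prop) : Prop :=
  forall (s t : term F V) (w : list Pi) (theta : V -> term F V),
    wf ar s -> wf ar t -> is_subst ar theta ->
    steps R w s t -> steps R w (subst theta s) (subst theta t).

Definition star_then {A Pi : Type} (R : Pi -> A -> A -> Prop) (w1 w2 : list Pi)
  (a b : A) : Prop :=
  exists c, clos_refl_trans A (steps R w1) a c /\ steps R w2 c b.

(** Closure under substitutions turns the two chains of a recurrent pair into
    families of rewrite steps between the ground terms [c1[m,n]].  Instantiating
    [x, y] by [c2^m[s], c2^n[s]] in the first chain gives
    [c1[m, n+1] =>_w1 c1[m + n1, n]], so [c1[m,n] =>_w1^* c1[m + (n - n2) n1, n2]]
    whenever [n >= n2]; instantiating [x] by [c2^M[s]] in the second chain gives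
    [c1[M, n2] =>_w2 c1[M', n4 + M]] with [n4 + M >= n2].  Hence every
    [c1[m,n]] with [n >= n2] has a [(=>_w1^* o =>_w2)]-successor of the same
    shape, and iterating this step yields the infinite chain. *)

From Stdlib Require Import List Arith Relations Lia.
Import ListNotations.

Fixpoint term_nested_ind {F V : Type} (P : term F V -> Prop)
  (HVar : forall v, P (Var v)) (HFun : forall f l, Forall P l -> P (Fun f l))
  (t : term F V) : P t :=
  match t with
  | Var v => HVar v
  | Fun f l => HFun f l ((fix go (l : list (term F V)) : Forall P l :=
      match l with
      | nil => Forall_nil _
      | a :: l' => Forall_cons _ (term_nested_ind P HVar HFun a) (go l')
      end) l)
  end.

Lemma wf_Fun {F V : Type} (ar : F -> nat) (f : F) (l : list (term F V)) :
  wf ar (Fun f l) <-> length l = ar f /\ Forall (wf ar) l.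
Proof.
  simpl; split; intros [Hlen Hargs]; split; auto; clear Hlen.
  - induction l as [|a l IH]; simpl in *; [constructor|].
    destruct Hargs; constructor; auto.
  - induction l as [|a l IH]; simpl in *; auto.
    inversion Hargs; subst; split; [|apply IH]; auto.
Qed.

Lemma in_vars_Fun {F V : Type} (f : F) (l : list (term F V)) (u : term F V) (z : V) :
  In u l -> In z (vars u) -> In z (vars (Fun f l)).
Proof. intros Hu Hz; simpl; apply in_flat_map; eauto. Qed.

Lemma subst_id_on_vars {F V : Type} (theta : V -> term F V) (u : term F V) :
  (forall z, In z (vars u) -> theta z = Var z) -> subst theta u = u.
Proof.
  induction u as [v|f l IH] using term_nested_ind; intros Hfix.
  - apply Hfix; simpl; auto.
  - simpl; f_equal; rewrite <- (map_id l) at 2; apply map_ext_in.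
    intros u Hu; rewrite Forall_forall in IH.
    apply IH; auto; intros z Hz; apply Hfix, (in_vars_Fun f l u); auto.
Qed.

Lemma subst_fill2 {F V : Type} (c : ctx F V) (a b : term F V) (theta : V -> term F V) :
  (forall z, In z (vars c) -> theta z = Var z) ->
  subst theta (fill2 c a b) = fill2 c (subst theta a) (subst theta b).
Proof.
  induction c as [v|f l IH] using term_nested_ind; intros Hfix.
  - apply Hfix; simpl; auto.
  - destruct f as [f|[|]]; simpl; auto.
    f_equal; rewrite map_map; apply map_ext_in.
    intros c Hc; rewrite Forall_forall in IH.
    apply IH; auto; intros z Hz; apply Hfix, (in_vars_Fun (inl f) l c); auto.
Qed.

Lemma wf_fill2 {F V : Type} (ar : F -> nat) (c : ctx F V) (a b : term F V) :
  wf (ar_ext ar) c -> wf ar a -> wf ar b -> wf ar (fill2 c a b).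
Proof.
  induction c as [v|f l IH] using term_nested_ind; intros Hc Ha Hb; simpl; auto.
  destruct f as [f|[|]]; auto.
  apply wf_Fun in Hc as [Hlen Hargs]; apply wf_Fun; split.
  - rewrite length_map; exact Hlen.
  - rewrite Forall_forall in *; intros u Hu.
    apply in_map_iff in Hu as [c [<- Hc]]; auto.
Qed.

Lemma fill_iter_add {F V : Type} (c : ctx F V) (a b : nat) (u : term F V) :
  fill_iter c a (fill_iter c b u) = fill_iter c (a + b) u.
Proof. induction a as [|a IH]; simpl; congruence. Qed.

Lemma wf_fill_iter {F V : Type} (ar : F -> nat) (c : ctx F V) (k : nat) (u : term F V) :
  wf (ar_ext ar) c -> wf ar u -> wf ar (fill_iter c k u).
Proof. intros Hc Hu; induction k; simpl; auto; apply wf_fill2; auto. Qed.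

Lemma subst_fill_iter {F V : Type} (c : ctx F V) (k : nat) (u : term F V)
    (theta : V -> term F V) :
  vars c = nil -> subst theta (fill_iter c k u) = fill_iter c k (subst theta u).
Proof.
  intros Hc; induction k as [|k IH]; simpl; auto.
  unfold fill1; rewrite subst_fill2, IH; auto.
  rewrite Hc; contradiction.
Qed.

Lemma steps_wf {F V Pi : Type} (ar : F -> nat) (R : Pi -> term F V -> term F V -> Prop) :
  (forall p a b, R p a b -> wf ar a /\ wf ar b) ->
  forall w a b, w <> nil -> steps R w a b -> wf ar a /\ wf ar b.
Proof.
  intros HR w; induction w as [|p w IH]; intros a b Hw Hw_ab; [easy|].
  destruct Hw_ab as [a1 [Hp Hsteps]].
  destruct w as [|q w]; simpl in Hsteps.
  - subst; apply (HR p); auto.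
  - split; [apply (HR p a a1 Hp)|apply (IH a1 b); [easy|auto]].
Qed.

Lemma steps_subst {F V Pi : Type} (ar : F -> nat) (R : Pi -> term F V -> term F V -> Prop)
    (w : list Pi) (a b : term F V) (theta : V -> term F V) :
  (forall p a b, R p a b -> wf ar a /\ wf ar b) -> closed_under_subst ar R ->
  is_subst ar theta -> steps R w a b -> steps R w (subst theta a) (subst theta b).
Proof.
  intros HR Hclosed Htheta Hsteps; destruct w as [|p w].
  - simpl in *; congruence.
  - destruct (steps_wf ar R HR (p :: w) a b) as [Ha Hb]; try easy.
    apply Hclosed; auto.
Qed.

Lemma infinite_chain_of_step {A : Type} (rel : A -> A -> Prop) (P : A -> Prop)
    (next : A -> A) :
  (forall a, P a -> P (next a) /\ rel a (next a)) ->
  forall a, P a -> exists seq : nat -> A, seq 0 = a /\ forall k, rel (seq k) (seq (S k)).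
Proof.
  intros Hnext a Ha; exists (fun k => Nat.iter k next a); split; [reflexivity|].
  assert (Hinv : forall k, P (Nat.iter k next a))
    by (induction k; simpl; auto; apply Hnext; auto).
  intros k; apply Hnext, Hinv.
Qed.

Definition subst_two {F : Type} (x y : nat) (A B : term F nat) (z : nat) : term F nat :=
  if Nat.eqb z x then A else if Nat.eqb z y then B else Var z.

Lemma subst_two_is_subst {F : Type} (ar : F -> nat) (x y : nat) (A B : term F nat) :
  wf ar A -> wf ar B -> is_subst ar (subst_two x y A B).
Proof.
  intros HA HB; split.
  - intros z; unfold subst_two.
    destruct (Nat.eqb z x); [auto|destruct (Nat.eqb z y); simpl; auto].
  - exists [x; y]; intros z Hz; unfold subst_two.
    destruct (Nat.eqb_spec z x); [subst; simpl in Hz; tauto|].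
    destruct (Nat.eqb_spec z y); [subst; simpl in Hz; tauto|auto].
Qed.

Lemma subst_two_l {F : Type} (x y : nat) (A B : term F nat) :
  subst_two x y A B x = A.
Proof. unfold subst_two; now rewrite Nat.eqb_refl. Qed.

Lemma subst_two_r {F : Type} (x y : nat) (A B : term F nat) :
  x <> y -> subst_two x y A B y = B.
Proof.
  intros Hxy; unfold subst_two.
  destruct (Nat.eqb_spec y x); [congruence|now rewrite Nat.eqb_refl].
Qed.

Lemma subst_two_other {F : Type} (x y : nat) (A B : term F nat) (z : nat) :
  z <> x -> z <> y -> subst_two x y A B z = Var z.
Proof.
  intros Hx Hy; unfold subst_two.
  now destruct (Nat.eqb_spec z x), (Nat.eqb_spec z y).
Qed.

Definition fill_pow2 {F V : Type} (c1 c2 : ctx F V) (s : term F V) (p : nat * nat) :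
  term F V :=
  fill2 c1 (fill_iter c2 (fst p) s) (fill_iter c2 (snd p) s).

Section RecurrentPair.

Context {F : Type} {ar : F -> nat} {Pi : Type} {R : Pi -> term F nat -> term F nat -> Prop}.
Hypothesis HR : forall p a b, R p a b -> wf ar a /\ wf ar b.
Hypothesis Hclosed : closed_under_subst ar R.

Context {c1 c2 : ctx F nat} {x y : nat} {s t : term F nat}
  {n1 n2 n3 n4 : nat} {w1 w2 : list Pi}.
Hypothesis Hc2wf : wf (ar_ext ar) c2.
Hypothesis Hswf : wf ar s.
Hypothesis Hxy : x <> y.
Hypothesis Hx : ~ In x (vars c1).
Hypothesis Hy : ~ In y (vars c1).
Hypothesis Hc2var : vars c2 = nil.
Hypothesis Hsvar : vars s = nil.
Hypothesis Ht : t = Var x \/ t = s.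
Hypothesis Hn42 : n2 <= n4.
Hypothesis Hchain1 : steps R w1 (fill2 c1 (Var x) (fill1 c2 (Var y)))
                                (fill2 c1 (fill_iter c2 n1 (Var x)) (Var y)).
Hypothesis Hchain2 : steps R w2 (fill2 c1 (Var x) (fill_iter c2 n2 s))
                                (fill2 c1 (fill_iter c2 n3 t) (fill_iter c2 n4 (Var x))).

Let C := fill_pow2 c1 c2 s.

Lemma wf_fill_iter_s (k : nat) : wf ar (fill_iter c2 k s).
Proof. apply wf_fill_iter; auto. Qed.

Lemma subst_two_fill2_c1 (A B : term F nat) (a b : term F nat) :
  subst (subst_two x y A B) (fill2 c1 a b)
  = fill2 c1 (subst (subst_two x y A B) a) (subst (subst_two x y A B) b).
Proof.
  apply subst_fill2; intros z Hz.
  apply subst_two_other; intros ->; contradiction.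
Qed.

Lemma subst_s (theta : nat -> term F nat) : subst theta s = s.
Proof. apply subst_id_on_vars; rewrite Hsvar; contradiction. Qed.

Lemma chain1_shift (m n : nat) : steps R w1 (C (m, S n)) (C (n1 + m, n)).
Proof.
  assert (Hinst := steps_subst ar R w1 _ _
                     (subst_two x y (fill_iter c2 m s) (fill_iter c2 n s)) HR Hclosed
                     (subst_two_is_subst ar x y _ _ (wf_fill_iter_s m) (wf_fill_iter_s n))
                     Hchain1).
  rewrite !subst_two_fill2_c1 in Hinst.
  change (fill1 c2 (Var y)) with (fill_iter c2 1 (Var y)) in Hinst.
  rewrite !subst_fill_iter in Hinst by exact Hc2var.
  simpl subst in Hinst.
  rewrite subst_two_l, subst_two_r, !fill_iter_add in Hinst by exact Hxy.
  exact Hinst.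
Qed.

Lemma chain1_iter (m n j : nat) :
  clos_refl_trans _ (steps R w1) (C (m, j + n)) (C (j * n1 + m, n)).
Proof.
  revert m; induction j as [|j IH]; intros m; [apply rt_refl|].
  eapply rt_trans; [apply rt_step, chain1_shift|].
  replace (S j * n1 + m) with (j * n1 + (n1 + m)) by lia.
  apply IH.
Qed.

Lemma chain2_instance :
  exists g : nat -> nat, forall M, steps R w2 (C (M, n2)) (C (g M, n4 + M)).
Proof.
  assert (Hinst : forall M, steps R w2 (C (M, n2))
            (fill2 c1 (fill_iter c2 n3 (subst (subst_two x y (fill_iter c2 M s) (Var y)) t))
                      (fill_iter c2 (n4 + M) s))).
  { intros M.
    (* [y] does not occur in the second chain, so its image is irrelevant. *)
    assert (H := steps_subst ar R w2 _ _ (subst_two x y (fill_iter c2 M s) (Var y))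
                   HR Hclosed
                   (subst_two_is_subst ar x y _ (Var y) (wf_fill_iter_s M) I) Hchain2).
    rewrite !subst_two_fill2_c1, !subst_fill_iter, subst_s in H by exact Hc2var.
    simpl subst in H at 1 3.
    rewrite !subst_two_l, fill_iter_add in H.
    exact H. }
  destruct Ht as [-> | ->].
  - exists (fun M => n3 + M); intros M.
    specialize (Hinst M); simpl subst in Hinst.
    rewrite subst_two_l, fill_iter_add in Hinst; exact Hinst.
  - exists (fun _ => n3); intros M.
    specialize (Hinst M); rewrite subst_s in Hinst; exact Hinst.
Qed.

Lemma recurrent_pair_step :
  exists next : nat * nat -> nat * nat, forall p, n2 <= snd p ->
    n2 <= snd (next p) /\ star_then R w1 w2 (C p) (C (next p)).
Proof.
  destruct chain2_instance as [g Hg].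
  exists (fun p => let M := (snd p - n2) * n1 + fst p in (g M, n4 + M)).
  intros [m n] Hn; simpl in *; split; [lia|].
  exists (C ((n - n2) * n1 + m, n2)); split; [|apply Hg].
  replace n with ((n - n2) + n2) at 1 by lia.
  apply chain1_iter.
Qed.

End RecurrentPair.

Theorem corollary13
  (F : Type) (ar : F -> nat) (Pi : Type)
  (R : Pi -> term F nat -> term F nat -> Prop)
  (* the relations live on A = T(Sigma, X) *)
  (HA : forall p a b, R p a b -> wf ar a /\ wf ar b)
  (Hclosed : closed_under_subst ar R)
  (c1 c2 : ctx F nat) (x y : nat) (s t : term F nat)
  (n1 n2 n3 n4 : nat) (w1 w2 : list Pi)
  (Hc1wf : wf (ar_ext ar) c1) (Hc2wf : wf (ar_ext ar) c2) (Hswf : wf ar s)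
  (Hc1box : hole_occurs Box c1) (Hc1box' : hole_occurs Box' c1)
  (Hc2box : hole_occurs Box c2) (Hc2nobox' : ~ hole_occurs Box' c2)
  (Hxy : x <> y) (Hx : ~ In x (vars c1)) (Hy : ~ In y (vars c1))
  (Hc2var : vars c2 = nil) (Hsvar : vars s = nil)
  (Ht : t = Var x \/ t = s)
  (Hn42 : n2 <= n4)
  (Hchain1 : steps R w1 (fill2 c1 (Var x) (fill1 c2 (Var y)))
                        (fill2 c1 (fill_iter c2 n1 (Var x)) (Var y)))
  (Hchain2 : steps R w2 (fill2 c1 (Var x) (fill_iter c2 n2 s))
                        (fill2 c1 (fill_iter c2 n3 t) (fill_iter c2 n4 (Var x)))) :
  forall m n : nat, n2 <= n ->
    exists a : nat -> term F nat,
      a 0 = fill2 c1 (fill_iter c2 m s) (fill_iter c2 n s) /\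
      forall k, star_then R w1 w2 (a k) (a (S k)).
Proof.
  intros m n Hn.
  destruct (recurrent_pair_step HA Hclosed Hc2wf Hswf Hxy Hx Hy Hc2var Hsvar Ht Hn42
              Hchain1 Hchain2) as [next Hnext].
  destruct (infinite_chain_of_step
              (fun p q => star_then R w1 w2 (fill_pow2 c1 c2 s p) (fill_pow2 c1 c2 s q))
              (fun p => n2 <= snd p) next Hnext (m, n) Hn) as [seq [Hseq0 Hseq]].
  exists (fun k => fill_pow2 c1 c2 s (seq k)); split.
  - now rewrite Hseq0.
  - exact Hseq.
Qed.
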